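(* Let $\Pi$ be a ground HEX-program and $\mathbf{A}$ an interpretation. Let $\mathcal{C}$ be the partition of $A(\Pi)$ into subset-maximal strongly connected components of the graph with edge relation $\rightarrow\cup\rightarrow_e$, and for $C\in\mathcal{C}$ let $\Pi_C=\{r\in\Pi\mid H(r)\cap C\neq\emptyset\}$. If $U\neq\emptyset$ is an unfounded set of $\Pi$ with respect to $\mathbf{A}$, then for some $C\in\mathcal{C}$ the set $U\cap C$ is a nonempty unfounded set of $\Pi_C$ with respect to $\mathbf{A}$.
   Context: Ground HEX-programs. A ground ordinary atom is $p(c_1,\dots,c_\ell)$. A ground external atom is $\&g[\vec p](\vec c)$ with input list $\vec p=p_1,\dots,p_k$ (predicate names or constants) and output constants $\vec c$. A ground HEX-program is a finite set of rules $r$: $a_1\lor\dots\lor a_k\leftarrow b_1,\dots,b_m,\mathrm{not}\,b_{m+1},\dots,\mathrm{not}\,b_n$, with ordinary ground head atoms $a_i$ and each $b_j$ an ordinary or external ground atom; $H(r)=\{a_1,\dots,a_k\}$, $B^+(r)=\{b_1,\dots,b_m\}$, $B^-(r)=\{b_{m+1},\dots,b_n\}$, $B(r)$ the set of body literals. $A(\Pi)$ is the set of ordinary atoms occurring in $\Pi$. Interpretations: complete consistent sets $\mathbf{A}$ of signed literals $\mathbf{T}a$/$\mathbf{F}a$. $\mathbf{A}\models a$ (ordinary) iff $\mathbf{T}a\in\mathbf{A}$; $\mathbf{A}\models\&g[\vec p](\vec c)$ iff the Boolean oracle $f_{\&g}(\mathbf{A},\vec p,\vec c)=1$, where the oracle's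 value depends only on the extensions in $\mathbf{A}$ of the input predicates in $\vec p$; $\mathbf{A}\models\mathrm{not}\,b$ iff $\mathbf{A}\not\models b$. Unfounded sets: for a set $X$ of ordinary ground atoms appearing in $\Pi$, $\mathbf{A}\,\dot\cup\neg.\,X=(\mathbf{A}\setminus\{\mathbf{T}a\mid a\in X\})\cup\{\mathbf{F}a\mid a\in X\}$; $X$ is an unfounded set of $\Pi$ w.r.t. $\mathbf{A}$ iff for every $r\in\Pi$ with $H(r)\cap X\neq\emptyset$: (i) some literal of $B(r)$ is false w.r.t. $\mathbf{A}$, or (ii) some literal of $B(r)$ is false w.r.t. $\mathbf{A}\,\dot\cup\neg.\,X$, or (iii) some atom of $H(r)\setminus X$ is true w.r.t. $\mathbf{A}$. Dependencies: $x\rightarrow y$ iff some $r\in\Pi$ has $x\in H(r)$, $y\in B^+(r)$; $x\rightarrow_e y$ iff some $r\in\Pi$ has $x\in H(r)$ and an external atom $\&g[q_1,\dots,q_n](\vec e)\in B^+(r)\cup B^-(r)$ with some $q_i$ equal to the predicate of $y$. *)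

From Stdlib Require Import List.
From mathcomp Require Import all_boot.
Set Implicit Arguments. Unset Strict Implicit. Unset Printing Implicit Defensive.

Section Hex.
(* P : predicate names; Atom : ordinary ground atoms; Ext : ground external atoms
   &g[p](c) (input list and outputs fixed per element of Ext). *)
Variables (P Atom Ext : eqType).
Variable pred_of : Atom -> P.
Variable ext_inputs : Ext -> seq P.
Variable oracle : Ext -> (Atom -> bool) -> bool.

(* Interpretations: complete consistent sets of signed literals, i.e. maps
   Atom -> bool (Ta iff A a = true). *)
Definition interp := Atom -> bool.

Definition oracle_input_local : Prop :=
  forall (e : Ext) (A A' : interp),
    (forall a, pred_of a \in ext_inputs e -> A a = A' a) ->
    oracle e A = oracle e A'.

Definition batom := (Atom + Ext)%type.

Record rule := Rule { head : seq Atom; bpos : seq batom; bneg : seq batom }.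

Definition program := seq rule.

Definition batom_true (A : interp) (b : batom) : bool :=
  match b with inl a => A a | inr e => oracle e A end.

Definition body_false (A : interp) (r : rule) : bool :=
  has (fun b => ~~ batom_true A b) (bpos r) || has (batom_true A) (bneg r).

Definition unfalsify (A : interp) (X : pred Atom) : interp :=
  fun a => A a && ~~ X a.

Definition is_ord (a : Atom) (b : batom) : bool :=
  match b with inl a' => a' == a | inr _ => false end.
Definition atoms_of (Pi : program) : pred Atom :=
  fun a => has (fun r => (a \in head r) || has (is_ord a) (bpos r)
                         || has (is_ord a) (bneg r)) Pi.

(* X is an unfounded set of Pi w.r.t. A, where X ranges over sets of atoms of
   the domain D (D = A(Pi) of the ambient program). *)
Definition unfounded (D : pred Atom) (Pi : program) (A : interp) (X : pred Atom)
  : Prop :=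
  {subset X <= D} /\
  forall r, List.In r Pi -> has X (head r) ->
    [|| body_false A r, body_false (unfalsify A X) r
      | has (fun a => ~~ X a && A a) (head r)].

Definition is_ext_on (y : Atom) (b : batom) : bool :=
  match b with inl _ => false | inr e => pred_of y \in ext_inputs e end.

Definition dep (Pi : program) : rel Atom :=
  fun x y => atoms_of Pi x && atoms_of Pi y &&
    has (fun r => (x \in head r) &&
                  (has (is_ord y) (bpos r)
                   || has (is_ext_on y) (bpos r) || has (is_ext_on y) (bneg r))) Pi.

Definition reach (Pi : program) (x y : Atom) : Prop :=
  exists p : seq Atom, path (dep Pi) x p && (last x p == y).

Definition is_scc (Pi : program) (C : pred Atom) : Prop :=
  exists x, atoms_of Pi x /\
    forall y, C y <-> (atoms_of Pi y /\ reach Pi x y /\ reach Pi y x).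

Definition restrict (Pi : program) (C : pred Atom) : program :=
  filter (fun r => has C (head r)) Pi.

End Hex.

(** Choose an atom [a] of [U] that is maximal for reachability among the atoms
    of [U]: every atom of [U] reachable from [a] reaches [a] back. Such an atom
    exists because [A(Pi)] is finite. Let [C] be the component of [a]. If a rule
    has a head atom in [U :&: C], every atom of [U] it depends on, positively or
    through an external input, is reachable from that head atom and hence lies
    in [C]. So [U] and [U :&: C] agree on everything the rule looks at, and
    each reason that made the rule harmless for [U] carries over to
    [U :&: C]. *)

From Pilot Require Import Defs.
From mathcomp Require Import all_boot.
From Stdlib Require List.
From Stdlib Require Import ClassicalEpsilon Classical.
Set Implicit Arguments. Unset Strict Implicit. Unset Printing Implicit Defensive.

Lemma In_filter (T : Type) (p : pred T) (s : seq T) x :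
  List.In x (filter p s) -> List.In x s.
Proof.
elim: s => //= y s IH; case: ifP => _ /=; last by move/IH; right.
by case=> [<-|/IH]; [left|right].
Qed.

Lemma has_In (T : Type) (p : pred T) (s : seq T) x :
  List.In x s -> p x -> has p s.
Proof. by elim: s => //= y s IH [<- ->|/IH H /H ->]; rewrite ?orbT. Qed.

Lemma size_filter_predC1 (T : eqType) (a : T) (s : seq T) :
  a \in s -> size (filter (predC1 a) s) < size s.
Proof.
rewrite -has_pred1 has_count size_filter => a_in.
by rewrite -(count_predC (pred1 a) s) -[X in X < _]add0n ltn_add2r.
Qed.

Lemma exists_preorder_maximal (T : eqType) (R : T -> T -> Prop)
    (s : seq T) (U : pred T) :
  (forall x, R x x) -> (forall x y z, R x y -> R y z -> R x z) ->
  {subset U <= s} -> forall a, U a ->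
  exists2 m, U m & R a m /\ (forall b, U b -> R m b -> R b m).
Proof.
move=> R_refl R_trans sub_Us.
suff H n t a : size t <= n -> U a -> (forall b, U b -> R a b -> b \in t) ->
    exists2 m, U m & R a m /\ (forall b, U b -> R m b -> R b m).
  by move=> a Ua; apply: (H _ s a (leqnn _) Ua) => b /sub_Us.
elim: n t a => [|n IH] t a.
  by rewrite leqn0 => /nilP -> Ua /(_ a Ua (R_refl a)).
move=> size_t Ua sub_t.
case: (classic (exists b, [/\ U b, R a b & ~ R b a])) => [[b [Ub Rab nRba]]|].
  have size_t' : size (filter (predC1 a) t) <= n.
    by rewrite -ltnS; apply: leq_trans size_t; apply/size_filter_predC1/sub_t.
  have sub_t' c : U c -> R b c -> c \in filter (predC1 a) t.
    move=> Uc Rbc; rewrite mem_filter sub_t ?andbT //; last exact: R_trans Rab Rbc.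
    by apply/eqP => eq_ca; apply: nRba; rewrite -eq_ca.
  have [m Um [Rbm max_m]] := IH _ _ size_t' Ub sub_t'.
  by exists m => //; split=> //; apply: R_trans Rbm.
move=> no_escape; exists a => //; split=> // b Ub Rab.
by apply: NNPP => nRba; apply: no_escape; exists b.
Qed.

Section Dependencies.

Variables (P Atom Ext : eqType) (pred_of : Atom -> P) (ext_inputs : Ext -> seq P).

Definition rule_dep (r : rule Atom Ext) (y : Atom) : bool :=
  [|| has (is_ord y) (bpos r), has (is_ext_on pred_of ext_inputs y) (bpos r)
    | has (is_ext_on pred_of ext_inputs y) (bneg r)].

Variable Pi : program Atom Ext.

Local Notation dep := (dep pred_of ext_inputs Pi).
Local Notation reach := (reach pred_of ext_inputs Pi).

Lemma reach_refl x : reach x x.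
Proof. by exists [::]; rewrite /= eqxx. Qed.

Lemma reach_trans x y z : reach x y -> reach y z -> reach x z.
Proof.
move=> [p /andP [p_path /eqP <-]] [q /andP [q_path /eqP <-]].
by exists (p ++ q); rewrite cat_path last_cat p_path q_path eqxx.
Qed.

Lemma dep_reach x y : dep x y -> reach x y.
Proof. by move=> dxy; exists [:: y]; rewrite /= dxy eqxx. Qed.

Lemma dep_rule r x y : List.In r Pi -> x \in Defs.head r -> rule_dep r y ->
  atoms_of Pi y -> dep x y.
Proof.
move=> r_in x_head ry y_atom; rewrite /Defs.dep y_atom andbT.
have x_atom : atoms_of Pi x by apply: (has_In r_in); rewrite x_head.
by rewrite x_atom; apply: (has_In r_in); rewrite /= x_head -orbA.
Qed.

Definition ord_atom (b : batom Atom Ext) : option Atom :=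
  if b is inl a then Some a else None.

Definition atom_seq : seq Atom :=
  flatten [seq Defs.head r ++ pmap ord_atom (bpos r) ++ pmap ord_atom (bneg r)
          | r <- Pi].

Lemma mem_pmap_ord_atom a (s : seq (batom Atom Ext)) :
  has (is_ord a) s -> a \in pmap ord_atom s.
Proof.
by case/hasP=> [[a'|//] b_in /eqP <-]; rewrite mem_pmap; apply/mapP; exists (inl a').
Qed.

Lemma mem_atom_seq a : atoms_of Pi a -> a \in atom_seq.
Proof.
rewrite /atoms_of /atom_seq; elim: Pi => //= r s IH.
rewrite mem_cat => /orP [/orP [/orP [a_head|/mem_pmap_ord_atom a_pos]|/mem_pmap_ord_atom a_neg]|/IH ->];
  by rewrite ?orbT // !mem_cat ?a_head ?a_pos ?a_neg ?orbT.
Qed.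

(* The component is a boolean predicate only through classical choice. *)
Definition scc_of (a : Atom) : pred Atom := fun y =>
  if excluded_middle_informative (atoms_of Pi y /\ reach a y /\ reach y a)
  then true else false.

Lemma scc_ofP a y : scc_of a y <-> atoms_of Pi y /\ reach a y /\ reach y a.
Proof. by rewrite /scc_of; case: excluded_middle_informative. Qed.

Lemma is_scc_of a : atoms_of Pi a -> is_scc pred_of ext_inputs Pi (scc_of a).
Proof. by move=> a_atom; exists a; split=> // y; apply: scc_ofP. Qed.

Lemma scc_of_self a : atoms_of Pi a -> scc_of a a.
Proof. by move=> a_atom; apply/scc_ofP; split=> //; split; apply: reach_refl. Qed.

Lemma scc_of_maximal_closed (U : pred Atom) a x y :
  (forall b, U b -> reach a b -> reach b a) ->
  scc_of a x -> dep x y -> U y -> scc_of a y.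
Proof.
move=> max_a /scc_ofP [_ [Rax Rxa]] dxy Uy.
have Ray : reach a y := reach_trans Rax (dep_reach dxy).
by apply/scc_ofP; split; [case/andP: dxy => /andP [] | split; last exact: max_a].
Qed.

End Dependencies.

Section Unfounded.

Variables (P Atom Ext : eqType) (pred_of : Atom -> P) (ext_inputs : Ext -> seq P)
  (oracle : Ext -> (Atom -> bool) -> bool).
Hypothesis oracle_local : oracle_input_local pred_of ext_inputs oracle.
Variable A : interp Atom.

Local Notation rule_dep := (rule_dep pred_of ext_inputs).

Lemma body_false_unfalsify_agree (X Y : pred Atom) r :
  (forall y, Y y -> X y) -> (forall y, rule_dep r y -> X y = Y y) ->
  body_false oracle (unfalsify A X) r -> body_false oracle (unfalsify A Y) r.
Proof.
move=> sub_YX agree.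
have ext_agree e : (inr e \in bpos r) || (inr e \in bneg r) ->
    oracle e (unfalsify A X) = oracle e (unfalsify A Y).
  move=> e_in; apply: oracle_local => y y_input; rewrite /unfalsify agree //.
  by apply/or3P; case/orP: e_in => e_in; [constructor 2|constructor 3];
    apply/hasP; exists (inr e).
case/orP=> /hasP [b b_in b_val]; apply/orP; [left|right]; apply/hasP;
  exists b => //; case: b b_in b_val => [y|e] b_in /=; rewrite ?ext_agree ?b_in ?orbT //.
- rewrite /unfalsify -agree //.
  by rewrite /rule_dep; apply/orP; left; apply/hasP; exists (inl y); rewrite //= eqxx.
- by rewrite /unfalsify => /andP [-> nXy]; apply: contra nXy; apply: sub_YX.
Qed.

Lemma unfounded_agree (D : pred Atom) (Pi Pi' : program Atom Ext) (X Y : pred Atom) :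
  unfounded oracle D Pi A X ->
  (forall r, List.In r Pi' -> List.In r Pi) ->
  (forall y, Y y -> X y) ->
  (forall r, List.In r Pi' -> has Y (Defs.head r) ->
     forall y, rule_dep r y -> X y = Y y) ->
  unfounded oracle D Pi' A Y.
Proof.
move=> [sub_XD X_unf] sub_Pi sub_YX agree.
split=> [y /sub_YX /sub_XD //|r r_in Y_head].
have /or3P [->//|X_body|X_head] := X_unf r (sub_Pi r r_in) (sub_has sub_YX Y_head).
  by rewrite (body_false_unfalsify_agree sub_YX (agree r r_in Y_head) X_body) orbT.
apply/or3P; constructor 3; apply: sub_has X_head => y /andP [nXy ->].
by rewrite andbT; apply: contra nXy; apply: sub_YX.
Qed.

End Unfounded.

Theorem proposition3 (P Atom Ext : eqType) (pred_of : Atom -> P)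
  (ext_inputs : Ext -> seq P) (oracle : Ext -> (Atom -> bool) -> bool)
  (Hloc : oracle_input_local pred_of ext_inputs oracle)
  (Pi : program Atom Ext) (A : Atom -> bool) (U : pred Atom) :
  unfounded oracle (atoms_of Pi) Pi A U ->
  (exists a, U a) ->
  exists C : pred Atom,
    is_scc pred_of ext_inputs Pi C /\
    (exists a, U a && C a) /\
    unfounded oracle (atoms_of Pi) (restrict Pi C) A (predI U C).
Proof.
move=> U_unf [a0 Ua0]; have sub_U := U_unf.1.
have [a Ua [_ max_a]] := exists_preorder_maximal (@reach_refl _ _ _ pred_of ext_inputs Pi)
  (@reach_trans _ _ _ pred_of ext_inputs Pi) (fun y Uy => mem_atom_seq (sub_U y Uy)) Ua0.
have a_atom := sub_U a Ua.
exists (scc_of pred_of ext_inputs Pi a); split; first exact: is_scc_of.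
split; first by exists a; rewrite Ua scc_of_self.
apply: (unfounded_agree Hloc U_unf) => [r|y /andP [] //|]; first exact: In_filter.
move=> r r_in /hasP [x x_head /andP [_ Cx]] y ry /=.
case Uy: (U y) => //=; symmetry; apply: (scc_of_maximal_closed max_a Cx _ Uy).
exact: dep_rule (In_filter r_in) x_head ry (sub_U y Uy).
Qed.
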